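(* Let $G$ be a nonabelian group, let $\psi\in\operatorname{End}(G)$ satisfy $\psi([G,G])\le Z(G)$, and let $\alpha,\beta\in\mathscr{E}$. Write $\psi_\alpha=\psi\circ\alpha:G\to G$. Then for all $g,h\in G$: (1) $\psi_\alpha(1_G)=1_G$; (2) $\psi_{\alpha+\beta}(g)\equiv\psi_{\beta+\alpha}(g)\pmod{Z(G)}$; (3) $\psi_\alpha(gh)\equiv\psi_\alpha(g)\psi_\alpha(h)\pmod{Z(G)}$; (4) $\psi_\alpha(g)^{-1}\equiv\psi_\alpha(g^{-1})\pmod{Z(G)}$; (5) $\psi_\alpha(gh)\psi_\alpha(g)^{-1}\equiv\psi_\alpha(h)\pmod{Z(G)}$.
   Context: $Z(G)$ is the center and $[G,G]$ the commutator subgroup of $G$. For $x,y\in G$, $x\equiv y\pmod{Z(G)}$ means $x=yz$ for some $z\in Z(G)$. $\mathscr{E}$ denotes the set of formal expressions $\alpha=n_1\phi_1+\cdots+n_t\phi_t$ with $t\ge 0$, $n_i\in\mathbb Z$, $\phi_i\in\operatorname{End}(G)$ (the free group generated by $\operatorname{End}(G)$, written additively, with sum $\alpha+\beta$ given by concatenation), acting on $G$ by $\alpha(g)=\phi_1(g^{n_1})\phi_2(g^{n_2})\cdots\phi_t(g^{n_t})$. (The order of terms matters, so $\alpha+\beta$ and $\beta+\alpha$ may act differently.) *)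

From Stdlib Require Import ZArith List.
Import ListNotations.
Set Implicit Arguments.

Record Group := {
  carrier :> Type;
  gmul : carrier -> carrier -> carrier;
  gone : carrier;
  ginv : carrier -> carrier;
  gmulA : forall x y z, gmul x (gmul y z) = gmul (gmul x y) z;
  gmul1l : forall x, gmul gone x = x;
  gmul1r : forall x, gmul x gone = x;
  gmulVl : forall x, gmul (ginv x) x = gone;
  gmulVr : forall x, gmul x (ginv x) = gone }.

Arguments gmul {g}.
Arguments gone {g}.
Arguments ginv {g}.

Record Endo (G : Group) := {
  efun :> G -> G;
  efun_mul : forall x y, efun (gmul x y) = gmul (efun x) (efun y) }.

Fixpoint gpow_nat {G : Group} (g : G) (n : nat) : G :=
  match n with O => gone | S k => gmul g (gpow_nat g k) end.

Definition gpow {G : Group} (g : G) (n : Z) : G :=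
  if (0 <=? n)%Z then gpow_nat g (Z.to_nat n) else ginv (gpow_nat g (Z.abs_nat n)).

Definition nonabelian (G : Group) : Prop := exists x y : G, gmul x y <> gmul y x.

Definition central {G : Group} (z : G) : Prop := forall x : G, gmul z x = gmul x z.

Definition comm {G : Group} (x y : G) : G := gmul (gmul (ginv x) (ginv y)) (gmul x y).

Inductive in_derived {G : Group} : G -> Prop :=
  | der_comm : forall x y, in_derived (comm x y)
  | der_one : in_derived gone
  | der_mul : forall x y, in_derived x -> in_derived y -> in_derived (gmul x y)
  | der_inv : forall x, in_derived x -> in_derived (ginv x).

Definition congZ {G : Group} (x y : G) : Prop := exists z, central z /\ x = gmul y z.

(* Formal expressions n_1 φ_1 + ... + n_t φ_t, as a list of (n_i, φ_i);
   the sum α + β is list concatenation. *)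
Definition Expr (G : Group) := list (Z * Endo G).
Definition expr_add (G : Group) (a b : Expr G) : Expr G := a ++ b.

Fixpoint expr_act {G : Group} (a : Expr G) (g : G) : G :=
  match a with
  | [] => gone
  | (n, phi) :: rest => gmul (phi (gpow g n)) (expr_act rest g)
  end.

Definition psi_of {G : Group} (psi : Endo G) (a : Expr G) (g : G) : G := psi (expr_act a g).

(* Everything already holds modulo the derived subgroup: G/[G,G] is abelian,
   so g |-> phi(g^n), and hence every alpha, is a homomorphism modulo [G,G],
   and the order of the summands of alpha does not matter there. Since psi
   maps [G,G] into Z(G), it turns congruences modulo [G,G] into congruences
   modulo Z(G). *)
From Stdlib Require Import ZArith List.

Section GroupFacts.
Context {G : Group}.
Implicit Types x y z : G.

Lemma gmulI x y z : gmul x y = gmul x z -> y = z.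
Proof.
  intro E. rewrite <- (gmul1l _ y), <- (gmul1l _ z), <- (gmulVl _ x), <- !gmulA, E.
  reflexivity.
Qed.

Lemma ginv_unique x y : gmul x y = gone -> y = ginv x.
Proof. intro E. apply (gmulI x). rewrite E, gmulVr. reflexivity. Qed.

Lemma ginv1 : ginv (@gone G) = gone.
Proof. symmetry. apply ginv_unique, gmul1l. Qed.

Lemma ginvM x y : ginv (gmul x y) = gmul (ginv y) (ginv x).
Proof.
  symmetry. apply ginv_unique.
  rewrite <- gmulA, (gmulA _ y), gmulVr, gmul1l, gmulVr. reflexivity.
Qed.

Lemma gpow_nat1n n : gpow_nat (@gone G) n = gone.
Proof. induction n as [|n IH]; simpl; [reflexivity | rewrite IH; apply gmul1l]. Qed.

Lemma gpow1n n : gpow (@gone G) n = gone.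
Proof.
  unfold gpow. destruct (0 <=? n)%Z; rewrite gpow_nat1n; [reflexivity | apply ginv1].
Qed.

Lemma endo1 (phi : Endo G) : phi gone = gone.
Proof. apply (gmulI (phi gone)). rewrite <- efun_mul, !gmul1r. reflexivity. Qed.

Lemma endoV (phi : Endo G) x : phi (ginv x) = ginv (phi x).
Proof. apply ginv_unique. rewrite <- efun_mul, gmulVr. apply endo1. Qed.

Lemma endo_comm (phi : Endo G) x y : phi (comm x y) = comm (phi x) (phi y).
Proof. unfold comm. rewrite !efun_mul, !endoV. reflexivity. Qed.

Lemma in_derived_conj d y : in_derived d -> in_derived (gmul (gmul (ginv y) d) y).
Proof.
  intro Hd. replace (gmul (gmul (ginv y) d) y) with (gmul d (comm d y)).
  - apply der_mul; [assumption | apply der_comm].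
  - unfold comm. rewrite !gmulA, gmulVr, gmul1l. reflexivity.
Qed.

Lemma in_derived_endo (phi : Endo G) d : in_derived d -> in_derived (phi d).
Proof.
  induction 1.
  - rewrite endo_comm. apply der_comm.
  - rewrite endo1. apply der_one.
  - rewrite efun_mul. apply der_mul; assumption.
  - rewrite endoV. apply der_inv; assumption.
Qed.

End GroupFacts.

Section CongruenceModDerived.
Context {G : Group}.
Implicit Types x y z : G.

Definition congD x y : Prop := exists d, in_derived d /\ x = gmul y d.

Lemma congD_refl x : congD x x.
Proof. exists gone. split; [apply der_one | symmetry; apply gmul1r]. Qed.

Lemma congD_sym x y : congD x y -> congD y x.
Proof.
  intros [d [Hd ->]]. exists (ginv d). split; [apply der_inv; assumption |].
  rewrite <- gmulA, gmulVr, gmul1r. reflexivity.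
Qed.

Lemma congD_trans x y z : congD x y -> congD y z -> congD x z.
Proof.
  intros [d [Hd ->]] [e [He ->]]. exists (gmul e d).
  split; [apply der_mul; assumption | symmetry; apply gmulA].
Qed.

Lemma congD_mul x y x' y' : congD x y -> congD x' y' -> congD (gmul x x') (gmul y y').
Proof.
  intros [d [Hd ->]] [e [He ->]].
  (* y d y' e = y y' (y'^-1 d y') e *)
  exists (gmul (gmul (gmul (ginv y') d) y') e). split.
  - apply der_mul; [apply in_derived_conj |]; assumption.
  - rewrite !gmulA. f_equal. rewrite <- !gmulA. f_equal.
    rewrite !gmulA, gmulVr, gmul1l. reflexivity.
Qed.

Lemma congD_mulC x y : congD (gmul x y) (gmul y x).
Proof.
  exists (comm x y). split; [apply der_comm |]. unfold comm.
  rewrite !gmulA, <- (gmulA _ y x), gmulVr, gmul1r, gmulVr, gmul1l. reflexivity.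
Qed.

Lemma congD_mulACA x y x' y' :
  congD (gmul (gmul x y) (gmul x' y')) (gmul (gmul x x') (gmul y y')).
Proof.
  rewrite !gmulA. apply congD_mul; [| apply congD_refl]. rewrite <- !gmulA.
  apply congD_mul; [apply congD_refl | apply congD_mulC].
Qed.

Lemma congD_conj x y : congD (gmul (gmul x y) (ginv x)) y.
Proof.
  eapply congD_trans; [apply congD_mul; [apply congD_mulC | apply congD_refl] |].
  rewrite <- gmulA, gmulVr, gmul1r. apply congD_refl.
Qed.

Lemma congD_inv x y : congD x y -> congD (ginv x) (ginv y).
Proof.
  intros [d [Hd ->]]. rewrite ginvM.
  eapply congD_trans; [apply congD_mulC |].
  exists (ginv d). split; [apply der_inv; assumption | reflexivity].
Qed.

Lemma congD_mul1 x y : congD (gmul x y) gone -> congD y (ginv x).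
Proof.
  intros [d [Hd E]]. rewrite gmul1l in E. exists d. split; [assumption |].
  apply (gmulI x). rewrite E, gmulA, gmulVr, gmul1l. reflexivity.
Qed.

Lemma congD_endo (phi : Endo G) x y : congD x y -> congD (phi x) (phi y).
Proof.
  intros [d [Hd ->]]. exists (phi d).
  split; [apply in_derived_endo; assumption | apply efun_mul].
Qed.

Lemma congD_pow_natM x y n :
  congD (gpow_nat (gmul x y) n) (gmul (gpow_nat x n) (gpow_nat y n)).
Proof.
  induction n as [|n IH]; simpl.
  - rewrite gmul1l. apply congD_refl.
  - eapply congD_trans; [apply congD_mul; [apply congD_refl | apply IH] |].
    apply congD_mulACA.
Qed.

Lemma congD_powM x y n : congD (gpow (gmul x y) n) (gmul (gpow x n) (gpow y n)).
Proof.
  unfold gpow. destruct (0 <=? n)%Z; [apply congD_pow_natM |].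
  eapply congD_trans; [apply congD_inv, congD_pow_natM |].
  rewrite ginvM. apply congD_mulC.
Qed.

Lemma congD_morphV (f : G -> G) x :
  f gone = gone -> (forall y z, congD (f (gmul y z)) (gmul (f y) (f z))) ->
  congD (f (ginv x)) (ginv (f x)).
Proof.
  intros f1 fM. apply congD_mul1.
  rewrite <- f1, <- (gmulVr _ x). apply congD_sym, fM.
Qed.

Lemma congD_congZ (psi : Endo G) x y :
  (forall d : G, in_derived d -> central (psi d)) -> congD x y -> congZ (psi x) (psi y).
Proof.
  intros psiD [d [Hd ->]]. exists (psi d). split; [apply psiD; assumption | apply efun_mul].
Qed.

End CongruenceModDerived.

Section ExprAct.
Context {G : Group}.
Implicit Types (a b : Expr G) (g h : G).

Lemma expr_act_cat a b g : expr_act (a ++ b) g = gmul (expr_act a g) (expr_act b g).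
Proof.
  induction a as [|[n phi] a IH]; simpl.
  - symmetry. apply gmul1l.
  - rewrite IH. apply gmulA.
Qed.

Lemma expr_act1 a : expr_act a gone = gone.
Proof.
  induction a as [|[n phi] a IH]; simpl; [reflexivity |].
  rewrite IH, gpow1n, endo1. apply gmul1l.
Qed.

Lemma congD_expr_actC a b g : congD (expr_act (a ++ b) g) (expr_act (b ++ a) g).
Proof. rewrite !expr_act_cat. apply congD_mulC. Qed.

Lemma congD_expr_actM a g h :
  congD (expr_act a (gmul g h)) (gmul (expr_act a g) (expr_act a h)).
Proof.
  induction a as [|[n phi] a IH]; simpl.
  - rewrite gmul1l. apply congD_refl.
  - eapply congD_trans; [apply congD_mul; [apply congD_endo, congD_powM | apply IH] |].
    rewrite efun_mul. apply congD_mulACA.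
Qed.

Lemma congD_expr_actV a g : congD (expr_act a (ginv g)) (ginv (expr_act a g)).
Proof. apply congD_morphV; [apply expr_act1 | apply congD_expr_actM]. Qed.

End ExprAct.

Theorem lemma3p1 (G : Group) (psi : Endo G) (alpha beta : Expr G) :
  nonabelian G ->
  (forall x : G, in_derived x -> central (psi x)) ->
  psi_of psi alpha gone = gone /\
  (forall g : G,
     congZ (psi_of psi (expr_add alpha beta) g) (psi_of psi (expr_add beta alpha) g)) /\
  (forall g h : G,
     congZ (psi_of psi alpha (gmul g h)) (gmul (psi_of psi alpha g) (psi_of psi alpha h))) /\
  (forall g : G, congZ (ginv (psi_of psi alpha g)) (psi_of psi alpha (ginv g))) /\
  (forall g h : G,
     congZ (gmul (psi_of psi alpha (gmul g h)) (ginv (psi_of psi alpha g))) (psi_of psi alpha h)).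
Proof.
  intros _ psiD. unfold psi_of, expr_add.
  split; [| split; [| split; [| split]]].
  - rewrite expr_act1. apply endo1.
  - intro g. apply congD_congZ, congD_expr_actC; assumption.
  - intros g h. rewrite <- efun_mul. apply congD_congZ, congD_expr_actM; assumption.
  - intro g. rewrite <- endoV.
    apply congD_congZ, congD_sym, congD_expr_actV; assumption.
  - intros g h. rewrite <- endoV, <- efun_mul. apply congD_congZ; [assumption |].
    eapply congD_trans; [apply congD_mul; [apply congD_expr_actM | apply congD_refl] |].
    apply congD_conj.
Qed.
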